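(* Let $\phi:\mathbb{M}_n\to\mathbb{M}_m$ be a positive linear map with Hilbert–Schmidt adjoint $\phi^*$, and let $X\in\mathbb{M}_m^+$. Then: (1) $\ker(R_X)\subseteq\ker(\phi^* )$ if and only if $\ker(X)\subseteq\ker(\phi(\mathbf{1}_n))$; (2) if $\ker(R_X)\subseteq\ker(\phi^* )$, then $\ker(R_{\phi^*(X)})\subseteq\ker(\phi)$. The same two statements hold with $L_X$ and $L_{\phi^*(X)}$ in place of $R_X$ and $R_{\phi^*(X)}$.
   Context: $\mathbb{M}_k$ denotes the complex $k\times k$ matrices, $\mathbb{M}_k^+$ the positive semidefinite ones, $\mathbf{1}_n$ the identity. The adjoint $\phi^*:\mathbb{M}_m\to\mathbb{M}_n$ is with respect to $\langle A,B\rangle=\mathrm{Tr}[A^*B]$. For $X\in\mathbb{M}_k$, $R_X$ and $L_X$ are the linear operators on $\mathbb{M}_k$ given by $R_X(A)=AX$ and $L_X(A)=XA$; kernels of $R_X$, $\phi^*$, $\phi$ are kernels as linear maps on matrix spaces. A positive map sends positive semidefinite matrices to positive semidefinite matrices. *)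

(* Complex numbers are modelled as R[i] = complex R for a
   real closed field R (taking R to be the reals gives the complex numbers). *)
From HB Require Import structures.
From mathcomp Require Import all_boot all_order all_algebra.
From mathcomp Require Export complex.
Set Implicit Arguments. Unset Strict Implicit. Unset Printing Implicit Defensive.
Import Order.TTheory GRing.Theory Num.Theory.
Local Open Scope ring_scope.

Section Defs.
Variable C : numClosedFieldType.

Definition mxadj (p q : nat) (A : 'M[C]_(p, q)) : 'M[C]_(q, p) :=
  (map_mx Num.conj_op A)^T.

Definition hs_inner (k : nat) (A B : 'M[C]_k) : C := \tr (mxadj A *m B).

Definition psd (k : nat) (A : 'M[C]_k) : Prop :=
  mxadj A = A /\ forall v : 'cV[C]_k, 0 <= (mxadj v *m A *m v) 0 0.

Definition positive_map (n m : nat) (phi : 'M[C]_n -> 'M[C]_m) : Prop :=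
  forall A, psd A -> psd (phi A).

Definition is_hs_adjoint (n m : nat) (phi : 'M[C]_n -> 'M[C]_m)
  (phis : 'M[C]_m -> 'M[C]_n) : Prop :=
  forall (A : 'M[C]_n) (B : 'M[C]_m), hs_inner (phi A) B = hs_inner A (phis B).

Definition R_op (k : nat) (X : 'M[C]_k) : 'M[C]_k -> 'M[C]_k := fun A => A *m X.
Definition L_op (k : nat) (X : 'M[C]_k) : 'M[C]_k -> 'M[C]_k := fun A => X *m A.

Definition ker_sub (p q r : nat) (f : 'M[C]_p -> 'M[C]_q) (g : 'M[C]_p -> 'M[C]_r)
  : Prop := forall A, f A = 0 -> g A = 0.

Definition mxker_sub (k : nat) (X Y : 'M[C]_k) : Prop :=
  forall v : 'cV[C]_k, X *m v = 0 -> Y *m v = 0.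
End Defs.

(* A positive linear functional f on matrices has the face property: if
   f (w w^* ) = 0 then f (u w^* ) = f (w u^* ) = 0 for all u, since the nonnegative
   function t |-> f ((w + t u) (w + t u)^* ) has no linear part.  Applied to the
   functionals A |-> x^* phi(A) x, this shows that ker phi(1) lies in every
   ker phi(w w^* ), and that phi(w w^* ) = 0 forces phi(u w^* ) = phi(w u^* ) = 0.
   The matrices w w^* span all matrices, so phi^*(A) = 0 as soon as
   tr (A^* phi(w w^* )) = 0 for every w; with the kernel inclusion this gives (1).
   For (2), write B = sum_i e_i w_i^* (or sum_i w_i e_i^* ): from B phi^*(X) = 0 we get
   tr (phi(w_i w_i^* ) X) = w_i^* phi^*(X) w_i = 0, and a positive semidefinite Q with
   tr (Q X) = 0 and ker X included in ker Q vanishes (diagonalize X); hence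
   phi(w_i w_i^* ) = 0, and the face property kills every term of phi(B). *)

From HB Require Import structures.
From mathcomp Require Import all_boot all_order all_algebra complex.
From mathcomp Require Import sesquilinear spectral.
From mathcomp Require Import ring.
Import Order.TTheory GRing.Theory Num.Theory.
Local Open Scope ring_scope.

Set Implicit Arguments. Unset Strict Implicit. Unset Printing Implicit Defensive.

Section Adjoint.
Variable C : numClosedFieldType.

Lemma mxadjE p q (A : 'M[C]_(p, q)) i j : mxadj A i j = (A j i)^*.
Proof. by rewrite !mxE. Qed.

Lemma mxadjK p q (A : 'M[C]_(p, q)) : mxadj (mxadj A) = A.
Proof. by apply/matrixP=> i j; rewrite !mxadjE conjCK. Qed.

Lemma mxadjM p q r (A : 'M[C]_(p, q)) (B : 'M[C]_(q, r)) :
  mxadj (A *m B) = mxadj B *m mxadj A.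
Proof. by rewrite /mxadj map_mxM trmx_mul. Qed.

Lemma mxadjD p q (A B : 'M[C]_(p, q)) : mxadj (A + B) = mxadj A + mxadj B.
Proof. by apply/matrixP=> i j; rewrite !mxE rmorphD. Qed.

Lemma mxadjZ p q a (A : 'M[C]_(p, q)) : mxadj (a *: A) = a^* *: mxadj A.
Proof. by apply/matrixP=> i j; rewrite !mxE rmorphM. Qed.

Lemma mxadj0 p q : mxadj (0 : 'M[C]_(p, q)) = 0.
Proof. by apply/matrixP=> i j; rewrite !mxE rmorph0. Qed.

Lemma mxadj1 p : mxadj (1%:M : 'M[C]_p) = 1%:M.
Proof. by apply/matrixP=> i j; rewrite !mxE eq_sym rmorph_nat. Qed.

Lemma mxadj_delta p q (i : 'I_p) (j : 'I_q) :
  mxadj (delta_mx i j : 'M[C]_(p, q)) = delta_mx j i.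
Proof. by apply/matrixP=> a b; rewrite !mxE rmorph_nat andbC. Qed.

Lemma mxtrace_adj p (A : 'M[C]_p) : \tr (mxadj A) = (\tr A)^*.
Proof. by rewrite /mxtrace rmorph_sum; apply: eq_bigr => i _; rewrite mxadjE. Qed.

Lemma mxtrace11 (A : 'M[C]_1) : \tr A = A 0 0.
Proof. by rewrite /mxtrace big_ord1. Qed.

Lemma delta_mx_outer p (i j : 'I_p) :
  delta_mx i j = (delta_mx i 0 : 'cV[C]_p) *m mxadj (delta_mx j 0).
Proof. by rewrite mxadj_delta mul_delta_mx. Qed.

Lemma form_delta p (M : 'M[C]_p) i j :
  (mxadj (delta_mx i 0 : 'cV[C]_p) *m M *m (delta_mx j 0 : 'cV[C]_p)) 0 0 = M i j.
Proof. by rewrite mxadj_delta -rowE -colE !mxE. Qed.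

Lemma mxtrace_adjmul_eq0 p q (A : 'M[C]_(p, q)) : \tr (mxadj A *m A) = 0 -> A = 0.
Proof.
have -> : \tr (mxadj A *m A) = \sum_i \sum_j A j i * (A j i)^*.
  apply: eq_bigr => i _; rewrite mxE; apply: eq_bigr => j _.
  by rewrite mxadjE mulrC.
move=> A0; apply/matrixP => j i; rewrite mxE.
have colsum0 k : \sum_l A l k * (A l k)^* = 0.
  by apply: (psumr_eq0P _ A0) => // k' _; apply: sumr_ge0 => l _; exact: mul_conjC_ge0.
have /eqP := @psumr_eq0P _ _ _ _ (fun l _ => mul_conjC_ge0 (A l i)) (colsum0 i) j isT.
by rewrite mul_conjC_eq0 => /eqP.
Qed.

End Adjoint.

Section QuadraticForms.
Variable C : numClosedFieldType.

Lemma quadratic_ge0_linear_eq0 (s g : C) :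
  (forall r, r \is Num.real -> 0 <= r * s + r ^+ 2 * g) -> s = 0.
Proof.
move=> h.
have hp : 0 <= s + g by have := h 1 (rpred1 _); rewrite expr1n !mul1r.
have hn : 0 <= - s + g by have := h (-1) (rpredN1 _); rewrite sqrrN expr1n !mulN1r mul1r.
have g_ge0 : 0 <= g.
  by have := addr_ge0 hp hn; rewrite addrACA subrr add0r -mulr2n pmulrn_lge0.
have sR : s \is Num.real by rewrite -(addrK g s) rpredB ?ger0_real.
have g1 : g + 1 != 0 by rewrite gt_eqF // ltr_wpDl.
set x := s / (g + 1).
have xR : x \is Num.real by rewrite rpredM // realV rpredD ?ger0_real.
have : 0 <= - x ^+ 2.
  suff -> : - x ^+ 2 = - x * s + (- x) ^+ 2 * g by apply: h; rewrite rpredN.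
  by rewrite /x; field.
rewrite oppr_ge0 => x2_le0.
have /eqP : x ^+ 2 = 0 by apply/eqP; rewrite eq_le x2_le0 real_exprn_even_ge0.
by rewrite sqrf_eq0 mulf_eq0 invr_eq0 (negbTE g1) orbF => /eqP.
Qed.

Lemma sesquilinear_ge0_linear_eq0 (a b g : C) :
  (forall t, 0 <= t^* * a + t * b + t * t^* * g) -> a = 0 /\ b = 0.
Proof.
move=> h.
have ab0 : a + b = 0.
  apply: (@quadratic_ge0_linear_eq0 _ g) => r rR.
  by have := h r; rewrite conj_Creal //; congr (0 <= _); ring.
have ba0 : 'i * (b - a) = 0.
  apply: (@quadratic_ge0_linear_eq0 _ g) => r rR.
  have ir2 : 'i * r * (- 'i * r) = r ^+ 2.
    by rewrite mulNr mulrN mulrACA mulCii mulN1r opprK expr2.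
  have := h ('i * r); rewrite rmorphM /= conjCi conj_Creal // ir2.
  by congr (0 <= _); ring.
move: ba0 => /eqP; rewrite mulf_eq0 (negbTE (neq0Ci C)) subr_eq0 => /eqP ba.
move: ab0; rewrite ba -mulr2n => /eqP; rewrite mulrn_eq0 => /= /eqP a0.
by rewrite a0.
Qed.

End QuadraticForms.

Section PositiveFunctionals.
Variables (C : numClosedFieldType) (n : nat).

Definition positive_functional (f : 'M[C]_n -> C) :=
  forall w : 'cV[C]_n, 0 <= f (w *m mxadj w).

Lemma outer_polarization (u w : 'cV[C]_n) :
  2%:R *: (u *m mxadj w) + (1 + 'i) *: (u *m mxadj u + w *m mxadj w) =
    (u + w) *m mxadj (u + w) + 'i *: ((u + 'i *: w) *m mxadj (u + 'i *: w)).
Proof.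
apply/matrixP => a b; rewrite !mxE !big_ord1 !mxE.
rewrite !rmorphD !rmorphM /= conjCi.
set p := u a 0; set q := w a 0; set p' := (u b 0)^*; set q' := (w b 0)^*.
(* [ring] ignores ['i * 'i = -1], so add a multiple of [1 + 'i * 'i]. *)
have ii1 : 1 + 'i * 'i = 0 :> C by rewrite mulCii subrr.
transitivity (2%:R * (p * q') + (1 + 'i) * (p * p' + q * q')
              + (1 + 'i * 'i) * (q * p' - p * q' - 'i * q * q')).
  by rewrite ii1 mul0r addr0.
by ring.
Qed.

Lemma linear_outer_eq0 (U : lmodType C) (f : {linear 'M[C]_n -> U}) :
  (forall w : 'cV[C]_n, f (w *m mxadj w) = 0) -> forall A, f A = 0.
Proof.
move=> f0 A; rewrite (matrix_sum_delta A) linear_sum big1 // => i _.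
rewrite linear_sum big1 // => j _; rewrite linearZ delta_mx_outer.
have two_neq0 : (2%:R : C) != 0 by rewrite pnatr_eq0.
have f2 := congr1 f (outer_polarization (delta_mx i 0) (delta_mx j 0)).
rewrite !linearD !linearZ /= !f0 !scaler0 !addr0 in f2.
have fE : f ((delta_mx i 0 : 'cV[C]_n) *m mxadj (delta_mx j 0)) = 0.
  by rewrite -[f _]scale1r -(mulVf two_neq0) -scalerA f2 scaler0.
by rewrite fE; exact: scaler0.
Qed.

Lemma positive_functional_face (f : {linear 'M[C]_n -> C^o}) :
  positive_functional f -> forall w : 'cV[C]_n, f (w *m mxadj w) = 0 ->
  forall u, f (u *m mxadj w) = 0 /\ f (w *m mxadj u) = 0.
Proof.
move=> fpos w fw0 u.
suff [] : f (w *m mxadj u) = 0 /\ f (u *m mxadj w) = 0 by [].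
apply: (@sesquilinear_ge0_linear_eq0 _ _ _ (f (u *m mxadj u))) => t.
have -> : t^* * f (w *m mxadj u) + t * f (u *m mxadj w) + t * t^* * f (u *m mxadj u)
    = f ((w + t *: u) *m mxadj (w + t *: u)).
  rewrite mxadjD mxadjZ mulmxDl !mulmxDr -!scalemxAl -!scalemxAr scalerA.
  by rewrite !linearD !linearZ /= fw0 add0r addrA.
exact: fpos.
Qed.

Lemma positive_functional1_eq0 (f : {linear 'M[C]_n -> C^o}) :
  positive_functional f -> f 1%:M = 0 -> forall A, f A = 0.
Proof.
move=> fpos f1 A.
have fdiag j : f ((delta_mx j 0 : 'cV[C]_n) *m mxadj (delta_mx j 0)) = 0.
  have ge0 k : true -> 0 <= f (delta_mx k k).
    by move=> _; rewrite delta_mx_outer; exact: fpos.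
  rewrite -delta_mx_outer; apply: (psumr_eq0P ge0) => //.
  by rewrite -linear_sum -mx1_sum_delta.
rewrite (matrix_sum_delta A) linear_sum big1 // => i _.
rewrite linear_sum big1 // => j _.
by rewrite linearZ delta_mx_outer /= (positive_functional_face fpos (fdiag j) _).1; exact: scaler0.
Qed.

End PositiveFunctionals.

Section PositiveSemidefinite.
Variable C : numClosedFieldType.

Lemma mxker_sub_mul k p (X Y : 'M[C]_k) (B : 'M[C]_(k, p)) :
  mxker_sub X Y -> X *m B = 0 -> Y *m B = 0.
Proof.
move=> XY XB0; apply/matrixP => a j; rewrite [RHS]mxE.
have := XY (B *m delta_mx j 0); rewrite !mulmxA XB0 mul0mx => /(_ erefl).
by move=> /(congr1 (fun v : 'cV[C]_k => v a 0)); rewrite -colE !mxE.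
Qed.

Lemma mxtrace_mul_outer k (M : 'M[C]_k) (w : 'cV[C]_k) :
  \tr (M *m (w *m mxadj w)) = (mxadj w *m M *m w) 0 0.
Proof. by rewrite mulmxA mxtrace_mulC mulmxA mxtrace11. Qed.

Lemma mxtrace_outer_eq0 k (M : 'M[C]_k) :
  (forall x : 'cV[C]_k, \tr (M *m (x *m mxadj x)) = 0) -> M = 0.
Proof.
move=> M0; apply/matrixP => i j.
have := @linear_outer_eq0 _ _ _ (mxtrace \o mulmx M : {linear _ -> C^o}) M0 (delta_mx j i).
by rewrite /= delta_mx_outer mulmxA mxtrace_mulC mulmxA mxtrace11 form_delta mxE.
Qed.

Lemma psd_outer k (w : 'cV[C]_k) : psd (w *m mxadj w).
Proof.
split; first by rewrite mxadjM mxadjK.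
move=> x; have -> : mxadj x *m (w *m mxadj w) *m x
    = (mxadj x *m w) *m mxadj (mxadj x *m w) by rewrite mxadjM mxadjK !mulmxA.
by rewrite mxE big_ord1 mxadjE mul_conjC_ge0.
Qed.

Lemma psd1 k : psd (1%:M : 'M[C]_k).
Proof.
split=> [|x]; first exact: mxadj1.
rewrite mulmx1 mxE; apply: sumr_ge0 => j _; rewrite mxadjE mulrC.
exact: mul_conjC_ge0.
Qed.

Lemma psd_functional k (M : 'M[C]_k) :
  psd M -> positive_functional (mxtrace \o mulmx M).
Proof. by move=> [_ Mpos] w; rewrite /= mxtrace_mul_outer. Qed.

Lemma psd_form_eq0 k (M : 'M[C]_k) (v : 'cV[C]_k) :
  psd M -> (mxadj v *m M *m v) 0 0 = 0 -> M *m v = 0.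
Proof.
move=> Mpsd Mv0; apply/matrixP => i j; rewrite (ord1 j) [RHS]mxE.
have f0 : (mxtrace \o mulmx M) (v *m mxadj v) = 0 by rewrite /= mxtrace_mul_outer.
have [_] := positive_functional_face (psd_functional Mpsd) f0 (delta_mx i 0).
by rewrite /= mulmxA mxtrace_mulC mxtrace11 mxadj_delta -rowE mxE.
Qed.

Lemma psd_unitary_diag k (M : 'M[C]_k) : psd M ->
  exists P : 'M[C]_k, exists d : 'rV[C]_k,
   [/\ mxadj P *m P = 1%:M, P *m mxadj P = 1%:M, (forall i, 0 <= d 0 i)
     & M = mxadj P *m diag_mx d *m P].
Proof.
move=> [Mh Mpos].
have adjE (A : 'M[C]_k) : mxadj A = (A ^t*)%sesqui by rewrite /mxadj map_trmx.
have /hermitian_normalmx/orthomx_spectralP M_eq : M \is hermsymmx.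
  by rewrite is_hermitianmxE expr0 scale1r -adjE Mh.
have /unitarymxP PP : spectralmx M \is unitarymx by exact: spectral_unitarymx.
rewrite -adjE in PP.
rewrite invmx_unitary ?spectral_unitarymx // -adjE in M_eq.
move: (spectralmx M) (spectral_diag M) PP M_eq => P d PP M_eq.
exists P, d; split => //; first exact: mulmx1C.
move=> i; have := Mpos (mxadj P *m delta_mx i 0).
rewrite mxadjM mxadjK mxadj_delta M_eq !mulmxA -(mulmxA _ P) PP mulmx1.
by rewrite -(mulmxA _ P) PP mulmx1 -rowE -colE !mxE eqxx mulr1n.
Qed.

Lemma psd_mxtrace_mul_eq0 k (Q X : 'M[C]_k) : psd Q -> psd X -> mxker_sub X Q ->
  \tr (Q *m X) = 0 -> Q = 0.
Proof.
move=> Qpsd Xpsd XQ; have [P [d [PP1 PP2 d_ge0 X_eq]]] := psd_unitary_diag Xpsd.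
pose p i : 'cV[C]_k := mxadj P *m delta_mx i 0.
have Qp_ge0 i : 0 <= (mxadj (p i) *m Q *m p i) 0 0 by exact: Qpsd.2.
have -> : \tr (Q *m X) = \sum_i (mxadj (p i) *m Q *m p i) 0 0 * d 0 i.
  rewrite X_eq !mulmxA mxtrace_mulC !mulmxA mul_mx_diag /mxtrace.
  apply: eq_bigr => i _; rewrite /p mxadjM mxadjK mxadj_delta !mulmxA.
  by rewrite -rowE -colE -!row_mul !mxE.
move=> tr0.
have Qp0 i : Q *m p i = 0.
  have /eqP := @psumr_eq0P _ _ _ _ (fun i _ => mulr_ge0 (Qp_ge0 i) (d_ge0 i)) tr0 i isT.
  rewrite mulf_eq0 => /orP [/eqP|/eqP di0]; first exact: psd_form_eq0.
  have De : diag_mx d *m (delta_mx i 0 : 'cV[C]_k) = 0.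
    apply/matrixP => a b; rewrite mul_diag_mx !mxE.
    by have [->|_] := eqVneq a i; rewrite ?di0 ?mul0r ?mulr0.
  apply: XQ; rewrite X_eq /p !mulmxA -[_ *m P *m mxadj P]mulmxA PP2 mulmx1.
  by rewrite -mulmxA De mulmx0.
have QP : Q *m mxadj P = 0.
  apply/matrixP => a i; have /(congr1 (fun v : 'cV[C]_k => v a 0)) := Qp0 i.
  by rewrite /p mulmxA -colE !mxE.
by rewrite -[Q]mulmx1 -PP1 mulmxA QP mul0mx.
Qed.

End PositiveSemidefinite.

Section PositiveMaps.
Variables (C : numClosedFieldType) (n m : nat) (phi : {linear 'M[C]_n -> 'M[C]_m}).
Hypothesis phi_pos : positive_map phi.

Lemma positive_map_functional (x : 'cV[C]_m) :
  positive_functional (mxtrace \o mulmxr (x *m mxadj x) \o phi).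
Proof. by move=> w; rewrite /= mxtrace_mul_outer; exact: (phi_pos (psd_outer w)).2. Qed.

Lemma positive_map_mxker_outer (X : 'M[C]_m) (w : 'cV[C]_n) :
  mxker_sub X (phi 1%:M) -> mxker_sub X (phi (w *m mxadj w)).
Proof.
move=> X1 v /X1 phi1v; apply: psd_form_eq0; first exact: phi_pos (psd_outer w).
have f1 : (mxtrace \o mulmxr (v *m mxadj v) \o phi) 1%:M = 0.
  by rewrite /= mxtrace_mul_outer -mulmxA phi1v mulmx0 mxE.
rewrite -mxtrace_mul_outer.
exact: (positive_functional1_eq0 (positive_map_functional v) f1).
Qed.

Lemma positive_map_face (w u : 'cV[C]_n) : phi (w *m mxadj w) = 0 ->
  phi (u *m mxadj w) = 0 /\ phi (w *m mxadj u) = 0.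
Proof.
move=> phiw0.
have fw0 (x : 'cV[C]_m) :
    (mxtrace \o mulmxr (x *m mxadj x) \o phi) (w *m mxadj w) = 0.
  by rewrite /= phiw0 mul0mx mxtrace0.
by split; apply: mxtrace_outer_eq0 => x;
  have [] := positive_functional_face (positive_map_functional x) (fw0 x) u.
Qed.

Lemma hs_adjoint_eq0 (phis : 'M[C]_m -> 'M[C]_n) (A : 'M[C]_m) :
  is_hs_adjoint phi phis ->
  (forall w : 'cV[C]_n, \tr (mxadj A *m phi (w *m mxadj w)) = 0) -> phis A = 0.
Proof.
move=> adj A0; apply: mxtrace_adjmul_eq0; rewrite -[LHS]/(hs_inner _ _).
have := @linear_outer_eq0 _ _ _ (mxtrace \o mulmx (mxadj A) \o phi : {linear _ -> C^o}) A0 (phis A).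
rewrite -adj /hs_inner /= => trA0.
by rewrite -[A in _ *m A]mxadjK -mxadjM mxtrace_adj trA0 conjC0.
Qed.

End PositiveMaps.

Section Kernels.
Variables (C : numClosedFieldType) (n m : nat).
Variables (phi : {linear 'M[C]_n -> 'M[C]_m}) (phis : 'M[C]_m -> 'M[C]_n).
Variable X : 'M[C]_m.
Hypotheses (phi_pos : positive_map phi) (phi_adj : is_hs_adjoint phi phis).
Hypothesis X_psd : psd X.

Lemma mxker_phi1_of_ker_R_op : ker_sub (R_op X) phis -> mxker_sub X (phi 1%:M).
Proof.
move=> kerRX v Xv; set y := phi 1%:M *m v.
have : phis (y *m mxadj v) = 0.
  by apply: kerRX; rewrite /R_op -mulmxA -{1}X_psd.1 -mxadjM Xv mxadj0 mulmx0.
move=> /(congr1 (hs_inner 1%:M)); rewrite -phi_adj /hs_inner mulmx0 mxtrace0.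
by rewrite mulmxA mxtrace_mulC mulmxA -mxadjM => /mxtrace_adjmul_eq0.
Qed.

Lemma mxker_phi1_of_ker_L_op : ker_sub (L_op X) phis -> mxker_sub X (phi 1%:M).
Proof.
move=> kerLX v Xv; set y := phi 1%:M *m v.
have : phis (v *m mxadj y) = 0 by apply: kerLX; rewrite /L_op mulmxA Xv mul0mx.
move=> /(congr1 (hs_inner 1%:M)); rewrite -phi_adj /hs_inner mulmx0 mxtrace0.
by rewrite mulmxA mxtrace_mulC (phi_pos (psd1 _ _)).1 => /mxtrace_adjmul_eq0.
Qed.

Lemma ker_R_op_of_mxker_phi1 : mxker_sub X (phi 1%:M) -> ker_sub (R_op X) phis.
Proof.
move=> X1 A; rewrite /R_op => AX0; apply: (hs_adjoint_eq0 phi_adj) => w.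
rewrite mxtrace_mulC (mxker_sub_mul (positive_map_mxker_outer phi_pos w X1)) ?mxtrace0 //.
by rewrite -{1}X_psd.1 -mxadjM AX0 mxadj0.
Qed.

Lemma ker_L_op_of_mxker_phi1 : mxker_sub X (phi 1%:M) -> ker_sub (L_op X) phis.
Proof.
move=> X1 A; rewrite /L_op => XA0; apply: (hs_adjoint_eq0 phi_adj) => w.
have QA0 := mxker_sub_mul (positive_map_mxker_outer phi_pos w X1) XA0.
by rewrite -(phi_pos (psd_outer w)).1 -mxadjM mxtrace_adj QA0 mxtrace0 conjC0.
Qed.

Lemma phi_outer_eq0 (w : 'cV[C]_n) : mxker_sub X (phi 1%:M) ->
  (mxadj w *m phis X *m w) 0 0 = 0 -> phi (w *m mxadj w) = 0.
Proof.
move=> X1 w0; have Q_psd := phi_pos (psd_outer w).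
apply: (psd_mxtrace_mul_eq0 Q_psd X_psd (positive_map_mxker_outer phi_pos w X1)).
rewrite -{1}Q_psd.1 -[LHS]/(hs_inner _ X) phi_adj /hs_inner mxadjM mxadjK.
by rewrite mxtrace_mulC mxtrace_mul_outer.
Qed.

Lemma ker_R_op_adjoint : mxker_sub X (phi 1%:M) -> ker_sub (R_op (phis X)) phi.
Proof.
(* Split B as the sum of e_i w_i^* with w_i = B^* e_i. *)
move=> X1 B; rewrite /R_op => BX0; rewrite -[B]mul1mx mx1_sum_delta mulmx_suml linear_sum big1 // => i _.
rewrite delta_mx_outer -mulmxA -[mxadj _ *m B]mxadjK.
apply: (positive_map_face phi_pos _ _).1; apply: phi_outer_eq0 => //.
by rewrite mxadjK -(mulmxA _ B) BX0 mulmx0 mul0mx mxE.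
Qed.

Lemma ker_L_op_adjoint : mxker_sub X (phi 1%:M) -> ker_sub (L_op (phis X)) phi.
Proof.
move=> X1 B; rewrite /L_op => XB0; rewrite -[B]mulmx1 mx1_sum_delta mulmx_sumr linear_sum big1 // => i _.
rewrite delta_mx_outer mulmxA.
apply: (positive_map_face phi_pos _ _).2; apply: phi_outer_eq0 => //.
by rewrite -mulmxA (mulmxA (phis X)) XB0 mul0mx mulmx0 mxE.
Qed.

End Kernels.


Unset Implicit Arguments.
Set Strict Implicit.

Theorem lemma4p3 (R : rcfType) (n m : nat)
  (phi : {linear 'M[R[i]]_n -> 'M[R[i]]_m})
  (phis : 'M[R[i]]_m -> 'M[R[i]]_n)
  (X : 'M[R[i]]_m) :
  positive_map phi -> is_hs_adjoint phi phis -> psd X ->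
  ((ker_sub (R_op X) phis <-> mxker_sub X (phi 1%:M)) /\
   (ker_sub (R_op X) phis -> ker_sub (R_op (phis X)) phi)) /\
  ((ker_sub (L_op X) phis <-> mxker_sub X (phi 1%:M)) /\
   (ker_sub (L_op X) phis -> ker_sub (L_op (phis X)) phi)).
Proof.
move=> phi_pos phi_adj X_psd.
have R_iff : ker_sub (R_op X) phis <-> mxker_sub X (phi 1%:M).
  by split; [exact: mxker_phi1_of_ker_R_op | exact: ker_R_op_of_mxker_phi1].
have L_iff : ker_sub (L_op X) phis <-> mxker_sub X (phi 1%:M).
  by split; [exact: mxker_phi1_of_ker_L_op | exact: ker_L_op_of_mxker_phi1].
split; split => //.
- by move/R_iff; exact: ker_R_op_adjoint.
- by move/L_iff; exact: ker_L_op_adjoint.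
Qed.
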